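(* Let $A\bowtie^{\theta} I$ be an amalgamated Banach algebra as in the context, and assume $A\bowtie^{\theta} I$ is commutative. Then $A\bowtie^{\theta} I$ is weakly amenable if and only if both $A$ and $I$ are weakly amenable.
   Context: Let $A$ and $B$ be Banach algebras, $\theta:A\to B$ a continuous algebra homomorphism with $\|\theta\|\le 1$, and $I$ a closed two-sided ideal of $B$. The amalgamated Banach algebra $A\bowtie^{\theta} I$ is the Banach space $\{(a,i): a\in A,\ i\in I\}$ with norm $\|(a,i)\|=\|a\|+\|i\|$ and product $(a,i)\cdot(a',i')=(aa',\ \theta(a)i'+i\theta(a')+ii')$. A Banach algebra $C$ is weakly amenable if every bounded derivation $D:C\to C^*$ (i.e. bounded linear with $D(ab)=a\cdot D(b)+D(a)\cdot b$, where $\langle a\cdot f,b\rangle=f(ba)$, $\langle f\cdot a,b\rangle=f(ab)$) is inner, i.e. of the form $D(a)=a\cdot f-f\cdot a$ for some $f\in C^*$. *)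

From Stdlib Require Import Reals.
Open Scope R_scope.

Record Cx : Type := mkCx { Cre : R ; Cim : R }.
Definition C0 : Cx := mkCx 0 0.
Definition C1 : Cx := mkCx 1 0.
Definition Cadd (z w : Cx) : Cx := mkCx (Cre z + Cre w) (Cim z + Cim w).
Definition Copp (z : Cx) : Cx := mkCx (- Cre z) (- Cim z).
Definition Csub (z w : Cx) : Cx := Cadd z (Copp w).
Definition Cmul (z w : Cx) : Cx :=
  mkCx (Cre z * Cre w - Cim z * Cim w) (Cre z * Cim w + Cim z * Cre w).
Definition Cmod (z : Cx) : R := sqrt (Cre z * Cre z + Cim z * Cim z).

Record NAlg : Type := MkNAlg {
  carrier :> Type ;
  nadd  : carrier -> carrier -> carrier ;
  nzero : carrier ;
  nopp  : carrier -> carrier ;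
  nscal : Cx -> carrier -> carrier ;
  nmul  : carrier -> carrier -> carrier ;
  nnorm : carrier -> R
}.
Arguments nadd {n}. Arguments nzero {n}. Arguments nopp {n}.
Arguments nscal {n}. Arguments nmul {n}. Arguments nnorm {n}.

Definition nsub {X : NAlg} (x y : X) : X := nadd x (nopp y).

Definition cauchy {X : NAlg} (u : nat -> X) : Prop :=
  forall eps, 0 < eps -> exists N, forall m n, (N <= m)%nat -> (N <= n)%nat ->
    nnorm (nsub (u m) (u n)) < eps.
Definition converges {X : NAlg} (u : nat -> X) (l : X) : Prop :=
  forall eps, 0 < eps -> exists N, forall n, (N <= n)%nat ->
    nnorm (nsub (u n) l) < eps.

Record is_banach_algebra (X : NAlg) : Prop := {
  ba_add_assoc : forall x y z : X, nadd x (nadd y z) = nadd (nadd x y) z ;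
  ba_add_comm  : forall x y : X, nadd x y = nadd y x ;
  ba_add_0     : forall x : X, nadd nzero x = x ;
  ba_add_opp   : forall x : X, nadd (nopp x) x = nzero ;
  ba_scal_1    : forall x : X, nscal C1 x = x ;
  ba_scal_assoc : forall (l m : Cx) (x : X), nscal (Cmul l m) x = nscal l (nscal m x) ;
  ba_scal_addl : forall (l m : Cx) (x : X), nscal (Cadd l m) x = nadd (nscal l x) (nscal m x) ;
  ba_scal_addr : forall (l : Cx) (x y : X), nscal l (nadd x y) = nadd (nscal l x) (nscal l y) ;
  ba_mul_assoc : forall x y z : X, nmul x (nmul y z) = nmul (nmul x y) z ;
  ba_mul_addl  : forall x y z : X, nmul (nadd x y) z = nadd (nmul x z) (nmul y z) ;
  ba_mul_addr  : forall x y z : X, nmul x (nadd y z) = nadd (nmul x y) (nmul x z) ;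
  ba_mul_scall : forall (l : Cx) (x y : X), nmul (nscal l x) y = nscal l (nmul x y) ;
  ba_mul_scalr : forall (l : Cx) (x y : X), nmul x (nscal l y) = nscal l (nmul x y) ;
  ba_norm_eq0  : forall x : X, nnorm x = 0 -> x = nzero ;
  ba_norm_tri  : forall x y : X, nnorm (nadd x y) <= nnorm x + nnorm y ;
  ba_norm_scal : forall (l : Cx) (x : X), nnorm (nscal l x) = Cmod l * nnorm x ;
  ba_norm_mul  : forall x y : X, nnorm (nmul x y) <= nnorm x * nnorm y ;
  ba_complete  : forall u : nat -> X, cauchy u -> exists l, converges u l
}.

Definition commutative (X : NAlg) : Prop := forall x y : X, nmul x y = nmul y x.

Record contraction_hom (A B : NAlg) (theta : A -> B) : Prop := {
  th_add  : forall x y, theta (nadd x y) = nadd (theta x) (theta y) ;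
  th_scal : forall l x, theta (nscal l x) = nscal l (theta x) ;
  th_mul  : forall x y, theta (nmul x y) = nmul (theta x) (theta y) ;
  th_norm : forall x, nnorm (theta x) <= nnorm x
}.

Record closed_ideal (B : NAlg) (I : B -> Prop) : Prop := {
  ci_zero : I nzero ;
  ci_add  : forall x y, I x -> I y -> I (nadd x y) ;
  ci_opp  : forall x, I x -> I (nopp x) ;
  ci_scal : forall l x, I x -> I (nscal l x) ;
  ci_mull : forall b x, I x -> I (nmul b x) ;
  ci_mulr : forall b x, I x -> I (nmul x b) ;
  ci_closed : forall (u : nat -> B) l, (forall n, I (u n)) -> converges u l -> I l
}.

Section IdealAlg.
Variables (B : NAlg) (I : B -> Prop) (HI : closed_ideal B I).
Definition ICar := { x : B | I x }.
Definition Iadd (x y : ICar) : ICar :=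
  exist _ (nadd (proj1_sig x) (proj1_sig y)) (ci_add B I HI _ _ (proj2_sig x) (proj2_sig y)).
Definition Izero : ICar := exist _ nzero (ci_zero B I HI).
Definition Iopp (x : ICar) : ICar := exist _ (nopp (proj1_sig x)) (ci_opp B I HI _ (proj2_sig x)).
Definition Iscal (l : Cx) (x : ICar) : ICar :=
  exist _ (nscal l (proj1_sig x)) (ci_scal B I HI l _ (proj2_sig x)).
Definition Imul (x y : ICar) : ICar :=
  exist _ (nmul (proj1_sig x) (proj1_sig y)) (ci_mull B I HI (proj1_sig x) _ (proj2_sig y)).
Definition Inorm (x : ICar) : R := nnorm (proj1_sig x).
Definition ideal_alg : NAlg := MkNAlg ICar Iadd Izero Iopp Iscal Imul Inorm.
End IdealAlg.

Section Amalg.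
Variables (A B : NAlg) (theta : A -> B) (I : B -> Prop) (HI : closed_ideal B I).
Let J := ideal_alg B I HI.
Definition AICar := (A * J)%type.
Definition AIadd (x y : AICar) : AICar := (nadd (fst x) (fst y), nadd (snd x) (snd y)).
Definition AIzero : AICar := (nzero, nzero).
Definition AIopp (x : AICar) : AICar := (nopp (fst x), nopp (snd x)).
Definition AIscal (l : Cx) (x : AICar) : AICar := (nscal l (fst x), nscal l (snd x)).
Definition AImul_snd (x y : AICar) : J :=
  exist _ (nadd (nadd (nmul (theta (fst x)) (proj1_sig (snd y)))
                      (nmul (proj1_sig (snd x)) (theta (fst y))))
                (nmul (proj1_sig (snd x)) (proj1_sig (snd y))))
    (ci_add B I HI _ _
       (ci_add B I HI _ _ (ci_mull B I HI _ _ (proj2_sig (snd y)))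
                          (ci_mulr B I HI _ _ (proj2_sig (snd x))))
       (ci_mull B I HI _ _ (proj2_sig (snd y)))).
Definition AImul (x y : AICar) : AICar := (nmul (fst x) (fst y), AImul_snd x y).
Definition AInorm (x : AICar) : R := nnorm (fst x) + nnorm (snd x).
Definition amalg : NAlg := MkNAlg AICar AIadd AIzero AIopp AIscal AImul AInorm.
End Amalg.

Definition bounded_functional {X : NAlg} (f : X -> Cx) : Prop :=
  (forall x y, f (nadd x y) = Cadd (f x) (f y)) /\
  (forall l x, f (nscal l x) = Cmul l (f x)) /\
  (exists M, forall x, Cmod (f x) <= M * nnorm x).

(* D : X -> X^* bounded linear derivation, with
   <a.f, b> = f(ba), <f.a, b> = f(ab). *)
Definition bounded_derivation_to_dual {X : NAlg} (D : X -> X -> Cx) : Prop :=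
  (forall a, bounded_functional (D a)) /\
  (forall a b c, D (nadd a b) c = Cadd (D a c) (D b c)) /\
  (forall l a c, D (nscal l a) c = Cmul l (D a c)) /\
  (exists M, forall a c, Cmod (D a c) <= M * nnorm a * nnorm c) /\
  (forall a b c, D (nmul a b) c = Cadd (D b (nmul c a)) (D a (nmul b c))).

(* D is inner: D(a) = a.f - f.a for some f in X^* *)
Definition inner_derivation {X : NAlg} (D : X -> X -> Cx) : Prop :=
  exists f : X -> Cx, bounded_functional f /\
    forall a c, D a c = Csub (f (nmul c a)) (f (nmul a c)).

Definition weakly_amenable (X : NAlg) : Prop :=
  forall D : X -> X -> Cx, bounded_derivation_to_dual D -> inner_derivation D.

(* On a commutative algebra every inner derivation into the dual is zero, so weak amenability
   means that every bounded derivation [D : X -> X^*] vanishes.  The key tool: if [X] is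
   commutative and weakly amenable and [f] is in [X^*] with [f(X^2) = 0], then
   [x, z |-> f(x) f(z)] is a derivation, hence [f = 0].

   If [A] and [I] are weakly amenable, a derivation on [A ⋈ I] restricts to derivations on [A]
   and [I], which vanish; its mixed parts [D(a)] and [D(-)(a)] restricted to [I] annihilate
   [I^2], hence vanish too.  Conversely a derivation on [A] lifts to [A ⋈ I] through the first
   coordinate.  A derivation [D] on [I] does not lift so directly, but for [p, q, m] in [I] the
   map [x, z |-> D(x z p q)(m) - D(z p q)(x m)] is a derivation on [A ⋈ I]; its vanishing gives
   [D(i)(k p q m) = 0], and [p], [q], [m] are then removed one by one, using that a functional
   on [I] annihilating [I^2] lifts to one on [A ⋈ I] annihilating [(A ⋈ I)^2]. *)

From Stdlib Require Import Reals Lra Psatz ProofIrrelevance.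
Open Scope R_scope.

Lemma Cx_ext (z w : Cx) : Cre z = Cre w -> Cim z = Cim w -> z = w.
Proof. destruct z, w; simpl; intros; subst; reflexivity. Qed.

Lemma Cmod_ge0 (z : Cx) : 0 <= Cmod z.
Proof. apply sqrt_pos. Qed.

Lemma Cmod_C0 : Cmod C0 = 0.
Proof. unfold Cmod, C0; simpl. replace (0 * 0 + 0 * 0) with 0 by ring. apply sqrt_0. Qed.

Lemma Cmod_mul (z w : Cx) : Cmod (Cmul z w) = Cmod z * Cmod w.
Proof.
  destruct z as [a b], w as [c d]; unfold Cmod, Cmul; simpl.
  rewrite <- sqrt_mult by nra. f_equal; ring.
Qed.

Lemma Cmod_opp (z : Cx) : Cmod (Copp z) = Cmod z.
Proof. destruct z as [a b]; unfold Cmod, Copp; simpl. f_equal; ring. Qed.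

Lemma Cmod_add_le (z w : Cx) : Cmod (Cadd z w) <= Cmod z + Cmod w.
Proof.
  destruct z as [a b], w as [c d]; unfold Cmod, Cadd; simpl.
  set (s := sqrt (a * a + b * b)); set (t := sqrt (c * c + d * d)).
  assert (s_ge0 : 0 <= s) by apply sqrt_pos.
  assert (t_ge0 : 0 <= t) by apply sqrt_pos.
  assert (s_sq : s * s = a * a + b * b) by (apply sqrt_sqrt; nra).
  assert (t_sq : t * t = c * c + d * d) by (apply sqrt_sqrt; nra).
  assert (cauchy_schwarz : a * c + b * d <= s * t).
  { destruct (Rle_dec (a * c + b * d) 0); [nra |].
    apply Rsqr_incr_0_var; [| nra]. unfold Rsqr.
    replace (s * t * (s * t)) with ((s * s) * (t * t)) by ring.
    rewrite s_sq, t_sq. pose proof (Rle_0_sqr (a * d - b * c)); unfold Rsqr in *; nra. }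
  rewrite <- (sqrt_square (s + t)) by lra. apply sqrt_le_1_alt. nra.
Qed.

Lemma Cmod_sub_le (z w : Cx) : Cmod (Csub z w) <= Cmod z + Cmod w.
Proof. unfold Csub. rewrite <- (Cmod_opp w). apply Cmod_add_le. Qed.

Lemma Cmul_self_eq0 (z : Cx) : Cmul z z = C0 -> z = C0.
Proof.
  destruct z as [a b]; unfold Cmul, C0; intro E; injection E as Ere Eim.
  assert (a = 0 /\ b = 0) as [-> ->].
  { assert (ab0 : a * b = 0) by lra.
    destruct (Rmult_integral _ _ ab0) as [-> | ->]; split; nra. }
  reflexivity.
Qed.

Section BanachAlgebraFacts.
Variable Y : NAlg.
Hypothesis HY : is_banach_algebra Y.

Lemma add_assoc_r (x y z : Y) : nadd (nadd x y) z = nadd x (nadd y z).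
Proof. symmetry; apply (ba_add_assoc _ HY). Qed.

Lemma add_left_comm (x y z : Y) : nadd x (nadd y z) = nadd y (nadd x z).
Proof.
  rewrite (ba_add_assoc _ HY), (ba_add_comm _ HY x y), <- (ba_add_assoc _ HY); reflexivity.
Qed.

Lemma add_0_r (x : Y) : nadd x nzero = x.
Proof. rewrite (ba_add_comm _ HY); apply (ba_add_0 _ HY). Qed.

Lemma add_eq_r_zero (x y : Y) : nadd x y = y -> x = nzero.
Proof.
  intro E. assert (Ey : nadd y (nopp y) = nzero).
  { rewrite (ba_add_comm _ HY); apply (ba_add_opp _ HY). }
  rewrite <- (add_0_r x), <- Ey, (ba_add_assoc _ HY), E; reflexivity.
Qed.

Lemma mul_0_l (x : Y) : nmul nzero x = nzero.
Proof.
  apply (add_eq_r_zero _ (nmul nzero x)).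
  rewrite <- (ba_mul_addl _ HY), (ba_add_0 _ HY); reflexivity.
Qed.

Lemma mul_0_r (x : Y) : nmul x nzero = nzero.
Proof.
  apply (add_eq_r_zero _ (nmul x nzero)).
  rewrite <- (ba_mul_addr _ HY), (ba_add_0 _ HY); reflexivity.
Qed.

Lemma scal_0_l (x : Y) : nscal C0 x = nzero.
Proof.
  apply (add_eq_r_zero _ (nscal C0 x)). rewrite <- (ba_scal_addl _ HY).
  f_equal; apply Cx_ext; simpl; ring.
Qed.

Lemma scal_0_r (l : Cx) : nscal l (@nzero Y) = nzero.
Proof.
  apply (add_eq_r_zero _ (nscal l nzero)).
  rewrite <- (ba_scal_addr _ HY), (ba_add_0 _ HY); reflexivity.
Qed.

Lemma norm_0 : nnorm (@nzero Y) = 0.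
Proof. rewrite <- (scal_0_l nzero), (ba_norm_scal _ HY), Cmod_C0; ring. Qed.

Lemma norm_ge0 (x : Y) : 0 <= nnorm x.
Proof.
  set (m1 := mkCx (-1) 0).
  assert (cancel : nadd x (nscal m1 x) = nzero).
  { rewrite <- (ba_scal_1 _ HY x) at 1. rewrite <- (ba_scal_addl _ HY), <- (scal_0_l x).
    f_equal; apply Cx_ext; unfold C1, C0; simpl; ring. }
  assert (Cmod_m1 : Cmod m1 = 1).
  { unfold Cmod; simpl. replace (-1 * -1 + 0 * 0) with 1 by ring. apply sqrt_1. }
  pose proof (ba_norm_tri _ HY x (nscal m1 x)) as tri.
  rewrite cancel, norm_0, (ba_norm_scal _ HY), Cmod_m1 in tri. lra.
Qed.

Lemma mul_assoc_r (x y z : Y) : nmul (nmul x y) z = nmul x (nmul y z).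
Proof. symmetry; apply (ba_mul_assoc _ HY). Qed.

End BanachAlgebraFacts.

Ltac nadd_bring HY a :=
  lazymatch goal with
  | |- _ = nadd a _ => idtac
  | |- _ = a => idtac
  | |- _ = ?t =>
    lazymatch t with
    | context [nadd ?b (nadd a ?r)] => rewrite (add_left_comm _ HY b a r); nadd_bring HY a
    | context [nadd ?b a] => rewrite (ba_add_comm _ HY b a); nadd_bring HY a
    end
  end.
Ltac nadd_ac_loop HY :=
  first [ reflexivity
        | lazymatch goal with
          | |- nadd ?a _ = _ => nadd_bring HY a; apply (f_equal (nadd a)); nadd_ac_loop HY
          end ].
Ltac nadd_ac HY := repeat rewrite (add_assoc_r _ HY); nadd_ac_loop HY.

Section CommutativeWeakAmenability.
Variable X : NAlg.
Hypothesis norm_nonneg : forall x : X, 0 <= nnorm x.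

Lemma bounded_derivation_intro (D : X -> X -> Cx) :
  (forall a x y, D a (nadd x y) = Cadd (D a x) (D a y)) ->
  (forall a l x, D a (nscal l x) = Cmul l (D a x)) ->
  (forall a b c, D (nadd a b) c = Cadd (D a c) (D b c)) ->
  (forall l a c, D (nscal l a) c = Cmul l (D a c)) ->
  (exists M, forall a c, Cmod (D a c) <= M * nnorm a * nnorm c) ->
  (forall a b c, D (nmul a b) c = Cadd (D b (nmul c a)) (D a (nmul b c))) ->
  bounded_derivation_to_dual D.
Proof.
  intros addr scalr addl scall [M HM] leibniz.
  split; [| split; [| split; [| split]]]; auto.
  - intro a. split; [| split]; auto. exists (M * nnorm a); auto.
  - exists M; auto.
Qed.

Lemma bounded_functional_nonneg_bound (f : X -> Cx) :
  bounded_functional f -> exists M, 0 <= M /\ forall x, Cmod (f x) <= M * nnorm x.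
Proof.
  intros [_ [_ [M HM]]]. exists (Rabs M). split; [apply Rabs_pos |].
  intro x. pose proof (HM x). pose proof (norm_nonneg x). pose proof (Rle_abs M). nra.
Qed.

Lemma bounded_derivation_nonneg_bound (D : X -> X -> Cx) :
  bounded_derivation_to_dual D ->
  exists M, 0 <= M /\ forall a c, Cmod (D a c) <= M * nnorm a * nnorm c.
Proof.
  intros [_ [_ [_ [[M HM] _]]]]. exists (Rabs M). split; [apply Rabs_pos |].
  intros a c. pose proof (HM a c). pose proof (norm_nonneg a). pose proof (norm_nonneg c).
  pose proof (Rle_abs M). pose proof (Rmult_le_pos _ _ (norm_nonneg a) (norm_nonneg c)). nra.
Qed.

Lemma inner_derivation_of_zero (D : X -> X -> Cx) :
  (forall a c, D a c = C0) -> inner_derivation D.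
Proof.
  intro D0. exists (fun _ => C0). split.
  - split; [| split].
    + intros; apply Cx_ext; simpl; ring.
    + intros; apply Cx_ext; simpl; ring.
    + exists 0; intros; rewrite Cmod_C0; lra.
  - intros; rewrite D0; apply Cx_ext; simpl; ring.
Qed.

Lemma weakly_amenable_of_derivation_zero :
  (forall D : X -> X -> Cx, bounded_derivation_to_dual D -> forall a c, D a c = C0) ->
  weakly_amenable X.
Proof. intros D0 D HD. apply inner_derivation_of_zero, (D0 D HD). Qed.

Hypothesis X_comm : commutative X.

(* Inner derivations [a.f - f.a] vanish on a commutative algebra. *)
Lemma weakly_amenable_derivation_zero : weakly_amenable X ->
  forall D : X -> X -> Cx, bounded_derivation_to_dual D -> forall a c, D a c = C0.
Proof.
  intros WX D HD a c. destruct (WX D HD) as [f [_ Df]].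
  rewrite Df, (X_comm c a). apply Cx_ext; simpl; ring.
Qed.

Lemma functional_square_derivation (f : X -> Cx) :
  bounded_functional f -> (forall x y, f (nmul x y) = C0) ->
  bounded_derivation_to_dual (fun x z => Cmul (f x) (f z)).
Proof.
  intros Hf f_mul0.
  destruct (bounded_functional_nonneg_bound f Hf) as [M [M_ge0 HM]].
  destruct Hf as [f_add [f_scal _]].
  apply bounded_derivation_intro.
  - intros; rewrite f_add; apply Cx_ext; simpl; ring.
  - intros; rewrite f_scal; apply Cx_ext; simpl; ring.
  - intros; rewrite f_add; apply Cx_ext; simpl; ring.
  - intros; rewrite f_scal; apply Cx_ext; simpl; ring.
  - exists (M * M); intros a c. rewrite Cmod_mul.
    replace (M * M * nnorm a * nnorm c) with ((M * nnorm a) * (M * nnorm c)) by ring.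
    apply Rmult_le_compat; auto using Cmod_ge0.
  - intros; rewrite !f_mul0; apply Cx_ext; simpl; ring.
Qed.

(* The derivation [x, z |-> f x f z] vanishes, so [f x ^ 2 = 0]. *)
Lemma functional_zero_of_square_annihilating : weakly_amenable X ->
  forall f : X -> Cx, bounded_functional f -> (forall x y, f (nmul x y) = C0) ->
  forall x, f x = C0.
Proof.
  intros WX f Hf f_mul0 x. apply Cmul_self_eq0.
  exact (weakly_amenable_derivation_zero WX _ (functional_square_derivation f Hf f_mul0) x x).
Qed.

End CommutativeWeakAmenability.

Section Amalgamation.
Variables (A B : NAlg) (theta : A -> B) (I : B -> Prop).
Hypotheses (HA : is_banach_algebra A) (HB : is_banach_algebra B)
  (Htheta : contraction_hom A B theta) (HI : closed_ideal B I).
Local Notation X := (amalg A B theta I HI).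
Local Notation J := (ideal_alg B I HI).

Lemma ideal_elem_eq (u v : J) : proj1_sig u = proj1_sig v -> u = v.
Proof. destruct u as [u Iu], v as [v Iv]; simpl; intros <-. f_equal; apply proof_irrelevance. Qed.

Lemma theta_0 : theta nzero = nzero.
Proof.
  apply (add_eq_r_zero _ HB _ (theta nzero)).
  rewrite <- (th_add _ _ _ Htheta), (ba_add_0 _ HA); reflexivity.
Qed.

Ltac B_simpl :=
  repeat rewrite ?(ba_mul_addl _ HB), ?(ba_mul_addr _ HB), ?(th_mul _ _ _ Htheta), ?theta_0,
    ?(mul_0_l _ HB), ?(mul_0_r _ HB), ?(ba_add_0 _ HB), ?(add_0_r _ HB), ?(mul_assoc_r _ HB).

Lemma amalg_mul_assoc (x y z : X) : nmul x (nmul y z) = nmul (nmul x y) z.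
Proof.
  destruct x as [a i], y as [b j], z as [c k]; unfold nmul; simpl; unfold AImul; simpl. f_equal.
  - apply (ba_mul_assoc _ HA).
  - apply ideal_elem_eq; simpl. B_simpl. nadd_ac HB.
Qed.

Lemma amalg_mul_addl (x y z : X) : nmul (nadd x y) z = nadd (nmul x z) (nmul y z).
Proof.
  destruct x as [a i], y as [b j], z as [c k]; unfold nmul; simpl; unfold AImul, AIadd; simpl.
  f_equal.
  - apply (ba_mul_addl _ HA).
  - apply ideal_elem_eq; simpl. rewrite (th_add _ _ _ Htheta). B_simpl. nadd_ac HB.
Qed.

Lemma amalg_mul_addr (x y z : X) : nmul x (nadd y z) = nadd (nmul x y) (nmul x z).
Proof.
  destruct x as [a i], y as [b j], z as [c k]; unfold nmul; simpl; unfold AImul, AIadd; simpl.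
  f_equal.
  - apply (ba_mul_addr _ HA).
  - apply ideal_elem_eq; simpl. rewrite (th_add _ _ _ Htheta). B_simpl. nadd_ac HB.
Qed.

Lemma amalg_mul_scall (l : Cx) (x y : X) : nmul (nscal l x) y = nscal l (nmul x y).
Proof.
  destruct x as [a i], y as [b j]; unfold nmul; simpl; unfold AImul, AIscal; simpl. f_equal.
  - apply (ba_mul_scall _ HA).
  - apply ideal_elem_eq; simpl.
    rewrite (th_scal _ _ _ Htheta), ?(ba_mul_scall _ HB), ?(ba_mul_scalr _ HB),
      !(ba_scal_addr _ HB); reflexivity.
Qed.

Lemma amalg_mul_scalr (l : Cx) (x y : X) : nmul x (nscal l y) = nscal l (nmul x y).
Proof.
  destruct x as [a i], y as [b j]; unfold nmul; simpl; unfold AImul, AIscal; simpl. f_equal.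
  - apply (ba_mul_scalr _ HA).
  - apply ideal_elem_eq; simpl.
    rewrite (th_scal _ _ _ Htheta), ?(ba_mul_scall _ HB), ?(ba_mul_scalr _ HB),
      !(ba_scal_addr _ HB); reflexivity.
Qed.

Lemma ideal_mul_assoc (i j k : J) : nmul i (nmul j k) = nmul (nmul i j) k.
Proof. apply ideal_elem_eq, (ba_mul_assoc _ HB). Qed.

Lemma ideal_mul_addr (i j k : J) : nmul i (nadd j k) = nadd (nmul i j) (nmul i k).
Proof. apply ideal_elem_eq, (ba_mul_addr _ HB). Qed.

Lemma ideal_mul_scalr (l : Cx) (i j : J) : nmul i (nscal l j) = nscal l (nmul i j).
Proof. apply ideal_elem_eq, (ba_mul_scalr _ HB). Qed.

Lemma ideal_norm_ge0 (k : J) : 0 <= nnorm k.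
Proof. apply (norm_ge0 _ HB). Qed.

Lemma ideal_norm_mul (i k : J) : nnorm (nmul i k) <= nnorm i * nnorm k.
Proof. apply (ba_norm_mul _ HB). Qed.

Lemma amalg_norm_ge0 (x : X) : 0 <= nnorm x.
Proof.
  destruct x as [a i]; simpl; unfold AInorm; simpl; unfold Inorm.
  pose proof (norm_ge0 _ HA a); pose proof (norm_ge0 _ HB (proj1_sig i)); lra.
Qed.

Lemma amalg_norm_fst (x : X) : nnorm (fst x) <= nnorm x.
Proof.
  destruct x as [a i]; simpl; unfold AInorm; simpl; unfold Inorm.
  pose proof (norm_ge0 _ HB (proj1_sig i)); lra.
Qed.

Lemma amalg_norm_snd (x : X) : nnorm (snd x) <= nnorm x.
Proof.
  destruct x as [a i]; simpl; unfold AInorm; simpl.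
  pose proof (norm_ge0 _ HA a); lra.
Qed.

Lemma amalg_norm_mul (x y : X) : nnorm (nmul x y) <= nnorm x * nnorm y.
Proof.
  destruct x as [a [i Ii]], y as [b [j Ij]]; simpl.
  unfold AInorm, AImul, AImul_snd; simpl; unfold Inorm; simpl.
  pose proof (ba_norm_mul _ HA a b).
  pose proof (ba_norm_tri _ HB (nadd (nmul (theta a) j) (nmul i (theta b))) (nmul i j)).
  pose proof (ba_norm_tri _ HB (nmul (theta a) j) (nmul i (theta b))).
  pose proof (ba_norm_mul _ HB (theta a) j). pose proof (ba_norm_mul _ HB i (theta b)).
  pose proof (ba_norm_mul _ HB i j).
  pose proof (th_norm _ _ _ Htheta a) as theta_a. pose proof (th_norm _ _ _ Htheta b) as theta_b.
  pose proof (norm_ge0 _ HA a). pose proof (norm_ge0 _ HA b).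
  pose proof (norm_ge0 _ HB i) as i_ge0. pose proof (norm_ge0 _ HB j) as j_ge0.
  pose proof (norm_ge0 _ HB (theta a)). pose proof (norm_ge0 _ HB (theta b)).
  pose proof (Rmult_le_compat_r _ _ _ j_ge0 theta_a).
  pose proof (Rmult_le_compat_l _ _ _ i_ge0 theta_b).
  nra.
Qed.

Definition embA (a : A) : X := (a, Izero B I HI).
Definition embJ (k : J) : X := (nzero, k).
Definition projA (x : X) : X := embA (fst x).
Definition projJ (x : X) : X := embJ (snd x).

Lemma amalg_decomp (x : X) : x = nadd (projA x) (projJ x).
Proof.
  destruct x as [a i]; unfold projA, projJ, embA, embJ; simpl; unfold AIadd; simpl. f_equal.
  - rewrite (add_0_r _ HA); reflexivity.
  - apply ideal_elem_eq; simpl. rewrite (ba_add_0 _ HB); reflexivity.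
Qed.

Lemma embJ_of_fst_zero (x : X) : fst x = nzero -> x = embJ (snd x).
Proof. destruct x; simpl; intros ->; reflexivity. Qed.

Lemma embA_add (a b : A) : embA (nadd a b) = nadd (embA a) (embA b).
Proof.
  unfold embA; simpl; unfold AIadd; simpl. f_equal.
  apply ideal_elem_eq; simpl. rewrite (ba_add_0 _ HB); reflexivity.
Qed.

Lemma embA_scal (l : Cx) (a : A) : embA (nscal l a) = nscal l (embA a).
Proof.
  unfold embA; simpl; unfold AIscal; simpl. f_equal.
  apply ideal_elem_eq; simpl. rewrite (scal_0_r _ HB); reflexivity.
Qed.

Lemma embA_mul (a b : A) : embA (nmul a b) = nmul (embA a) (embA b).
Proof.
  unfold embA; simpl; unfold AImul; simpl. f_equal.
  apply ideal_elem_eq; simpl. B_simpl. reflexivity.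
Qed.

Lemma embJ_add (i k : J) : embJ (nadd i k) = nadd (embJ i) (embJ k).
Proof. unfold embJ; simpl; unfold AIadd; simpl. f_equal. rewrite (ba_add_0 _ HA); reflexivity. Qed.

Lemma embJ_scal (l : Cx) (i : J) : embJ (nscal l i) = nscal l (embJ i).
Proof. unfold embJ; simpl; unfold AIscal; simpl. f_equal. rewrite (scal_0_r _ HA); reflexivity. Qed.

Lemma embJ_mul (i k : J) : embJ (nmul i k) = nmul (embJ i) (embJ k).
Proof.
  unfold embJ; simpl; unfold AImul; simpl. f_equal.
  - rewrite (mul_0_l _ HA); reflexivity.
  - apply ideal_elem_eq; simpl. B_simpl. reflexivity.
Qed.

Lemma norm_embA (a : A) : nnorm (embA a) = nnorm a.
Proof.
  unfold embA; simpl; unfold AInorm; simpl; unfold Inorm; simpl. rewrite (norm_0 _ HB); ring.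
Qed.

Lemma norm_embJ (k : J) : nnorm (embJ k) = nnorm k.
Proof. unfold embJ; simpl; unfold AInorm; simpl. rewrite (norm_0 _ HA); ring. Qed.

Lemma norm_projA (x : X) : nnorm (projA x) <= nnorm x.
Proof. unfold projA; rewrite norm_embA; apply amalg_norm_fst. Qed.

Lemma norm_projJ (x : X) : nnorm (projJ x) <= nnorm x.
Proof. unfold projJ; rewrite norm_embJ; apply amalg_norm_snd. Qed.

Lemma projA_add (x y : X) : projA (nadd x y) = nadd (projA x) (projA y).
Proof. apply embA_add. Qed.

Lemma projA_scal (l : Cx) (x : X) : projA (nscal l x) = nscal l (projA x).
Proof. apply embA_scal. Qed.

Lemma projA_mul (x y : X) : projA (nmul x y) = nmul (projA x) (projA y).
Proof. apply embA_mul. Qed.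

Lemma projJ_add (x y : X) : projJ (nadd x y) = nadd (projJ x) (projJ y).
Proof. apply embJ_add. Qed.

Lemma projJ_scal (l : Cx) (x : X) : projJ (nscal l x) = nscal l (projJ x).
Proof. apply embJ_scal. Qed.

Lemma projJ_mul (x y : X) : projJ (nmul x y) =
  nadd (nadd (nmul (projA x) (projJ y)) (nmul (projJ x) (projA y))) (nmul (projJ x) (projJ y)).
Proof.
  destruct x as [a i], y as [b j]; unfold projA, projJ, embA, embJ; simpl.
  unfold AImul, AIadd; simpl.
  f_equal.
  - rewrite (mul_0_r _ HA), !(mul_0_l _ HA), !(ba_add_0 _ HA); reflexivity.
  - apply ideal_elem_eq; simpl. B_simpl. reflexivity.
Qed.

Lemma snd_add (x y : X) : snd (nadd x y) = nadd (snd x) (snd y).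
Proof. reflexivity. Qed.

Lemma snd_scal (l : Cx) (x : X) : snd (nscal l x) = nscal l (snd x).
Proof. reflexivity. Qed.

Lemma fst_mul_zero_l (x y : X) : fst x = nzero -> fst (nmul x y) = nzero.
Proof. destruct x, y; simpl; intros ->; apply (mul_0_l _ HA). Qed.

Lemma fst_mul_zero_r (x y : X) : fst y = nzero -> fst (nmul x y) = nzero.
Proof. destruct x, y; simpl; intros ->; apply (mul_0_r _ HA). Qed.

Lemma snd_mul_of_fst_zero (x y : X) :
  fst x = nzero -> fst y = nzero -> snd (nmul x y) = nmul (snd x) (snd y).
Proof. destruct x, y; simpl; intros -> ->. apply ideal_elem_eq; simpl. B_simpl. reflexivity. Qed.

Ltac fst_zero :=
  first [ reflexivity | apply fst_mul_zero_l; fst_zero | apply fst_mul_zero_r; fst_zero ].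

Hypothesis X_comm : commutative X.

Lemma A_comm : commutative A.
Proof.
  intros a b. pose proof (f_equal fst (X_comm (embA a) (embA b))) as E.
  rewrite <- !embA_mul in E. exact E.
Qed.

Lemma J_comm : commutative J.
Proof.
  intros i k. pose proof (f_equal snd (X_comm (embJ i) (embJ k))) as E.
  rewrite <- !embJ_mul in E. exact E.
Qed.

Section DerivationOnAmalgamation.
Variable D : X -> X -> Cx.
Hypothesis HD : bounded_derivation_to_dual D.

Lemma embA_derivation : bounded_derivation_to_dual (fun a c : A => D (embA a) (embA c)).
Proof.
  destruct HD as [Df [Dadd [Dscal [[M HM] Dmul]]]].
  apply bounded_derivation_intro.
  - intros; rewrite embA_add; apply (Df _).
  - intros; rewrite embA_scal; apply (Df _).
  - intros; rewrite embA_add; apply Dadd.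
  - intros; rewrite embA_scal; apply Dscal.
  - exists M; intros; rewrite <- !norm_embA; apply HM.
  - intros; rewrite !embA_mul; apply Dmul.
Qed.

Lemma embJ_derivation : bounded_derivation_to_dual (fun i k : J => D (embJ i) (embJ k)).
Proof.
  destruct HD as [Df [Dadd [Dscal [[M HM] Dmul]]]].
  apply bounded_derivation_intro.
  - intros; rewrite embJ_add; apply (Df _).
  - intros; rewrite embJ_scal; apply (Df _).
  - intros; rewrite embJ_add; apply Dadd.
  - intros; rewrite embJ_scal; apply Dscal.
  - exists M; intros; rewrite <- !norm_embJ; apply HM.
  - intros; rewrite !embJ_mul; apply Dmul.
Qed.

Hypothesis J_wa : weakly_amenable J.

Lemma derivation_zero_on_ideal_part (u v : X) : fst u = nzero -> fst v = nzero -> D u v = C0.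
Proof.
  intros u0 v0. rewrite (embJ_of_fst_zero u u0), (embJ_of_fst_zero v v0).
  exact (weakly_amenable_derivation_zero J J_comm J_wa _ embJ_derivation _ _).
Qed.

(* In both mixed cases the functional on [J] kills [J^2], by the Leibniz rule and the vanishing
   on [J x J]. *)
Lemma derivation_zero_embA_embJ (a : A) (k : J) : D (embA a) (embJ k) = C0.
Proof.
  destruct HD as [Df [_ [_ [_ Dmul]]]].
  destruct (Df (embA a)) as [fadd [fscal [M HM]]].
  revert k. apply (functional_zero_of_square_annihilating J ideal_norm_ge0 J_comm J_wa).
  - split; [| split].
    + intros; rewrite embJ_add; apply fadd.
    + intros; rewrite embJ_scal; apply fscal.
    + exists M; intros; rewrite <- norm_embJ; apply HM.
  - intros j k. rewrite embJ_mul.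
    pose proof (Dmul (embA a) (embJ j) (embJ k)) as E.
    rewrite !derivation_zero_on_ideal_part in E by fst_zero.
    destruct (D (embA a) (nmul (embJ j) (embJ k))) as [re im].
    unfold Cadd, C0 in E; injection E as Ere Eim. apply Cx_ext; simpl; lra.
Qed.

Lemma derivation_zero_embJ_embA (a : A) (k : J) : D (embJ k) (embA a) = C0.
Proof.
  destruct HD as [_ [Dadd [Dscal [[M HM] Dmul]]]].
  revert k. apply (functional_zero_of_square_annihilating J ideal_norm_ge0 J_comm J_wa).
  - split; [| split].
    + intros; rewrite embJ_add; apply Dadd.
    + intros; rewrite embJ_scal; apply Dscal.
    + exists (M * nnorm (embA a)); intros k. rewrite <- norm_embJ.
      replace (M * nnorm (embA a) * nnorm (embJ k)) with (M * nnorm (embJ k) * nnorm (embA a))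
        by ring.
      apply HM.
  - intros j k. rewrite embJ_mul, Dmul, !derivation_zero_on_ideal_part by fst_zero.
    apply Cx_ext; simpl; ring.
Qed.

Hypothesis A_wa : weakly_amenable A.

Lemma amalg_derivation_zero (x z : X) : D x z = C0.
Proof.
  destruct HD as [Df [Dadd _]].
  rewrite (amalg_decomp x), (amalg_decomp z), Dadd.
  destruct (Df (projA x)) as [fadd_A _], (Df (projJ x)) as [fadd_J _].
  rewrite fadd_A, fadd_J. unfold projA, projJ.
  rewrite (weakly_amenable_derivation_zero A A_comm A_wa _ embA_derivation),
    derivation_zero_embA_embJ, derivation_zero_embJ_embA,
    (weakly_amenable_derivation_zero J J_comm J_wa _ embJ_derivation).
  apply Cx_ext; simpl; ring.
Qed.

End DerivationOnAmalgamation.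

Lemma amalg_weakly_amenable : weakly_amenable A -> weakly_amenable J -> weakly_amenable X.
Proof.
  intros A_wa J_wa. apply (weakly_amenable_of_derivation_zero X).
  intros D HD. exact (amalg_derivation_zero D HD J_wa A_wa).
Qed.

Hypothesis X_wa : weakly_amenable X.

Lemma weakly_amenable_A_of_amalg : weakly_amenable A.
Proof.
  apply (weakly_amenable_of_derivation_zero A). intros D HD a c.
  destruct (bounded_derivation_nonneg_bound A (norm_ge0 _ HA) D HD) as [M [M_ge0 HM]].
  destruct HD as [Df [Dadd [Dscal [_ Dmul]]]].
  assert (lifted : bounded_derivation_to_dual (fun x z : X => D (fst x) (fst z))).
  { apply bounded_derivation_intro.
    - intros u [x i] [y j]; apply (Df _).
    - intros u l [x i]; apply (Df _).
    - intros [x i] [y j] w; apply Dadd.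
    - intros l [x i] w; apply Dscal.
    - exists M; intros x z. eapply Rle_trans; [apply HM |].
      pose proof (amalg_norm_fst x); pose proof (amalg_norm_fst z).
      apply Rmult_le_compat; auto using Rmult_le_pos, norm_ge0, Rmult_le_compat_l.
    - intros [x i] [y j] [w k]; apply Dmul. }
  exact (weakly_amenable_derivation_zero X X_comm X_wa _ lifted (embA a) (embA c)).
Qed.

Section IdealFunctionals.
Variable f : J -> Cx.
Hypotheses (Hf : bounded_functional f) (f_mul0 : forall j k, f (nmul j k) = C0).

Let l (x : X) : Cx := f (snd x).

Lemma lifted_functional_bounded : bounded_functional l.
Proof.
  destruct (bounded_functional_nonneg_bound J ideal_norm_ge0 f Hf) as [M [M_ge0 HM]].
  destruct Hf as [fadd [fscal _]]. split; [| split].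
  - intros; apply fadd.
  - intros; apply fscal.
  - exists M; intro x. eapply Rle_trans; [apply HM |].
    apply Rmult_le_compat_l; [exact M_ge0 | apply amalg_norm_snd].
Qed.

Lemma lifted_functional_ideal_square (u v : X) :
  fst u = nzero -> fst v = nzero -> l (nmul u v) = C0.
Proof. intros u0 v0. unfold l. rewrite snd_mul_of_fst_zero by assumption. apply f_mul0. Qed.

(* [c_A a_J b_J] lies in [J^2], so only the two cross terms of [(ab)_J] survive. *)
Lemma mixed_term_derivation :
  bounded_derivation_to_dual (fun x z : X => l (nmul (projA z) (projJ x))).
Proof.
  destruct (bounded_functional_nonneg_bound X amalg_norm_ge0 l lifted_functional_bounded)
    as [M [M_ge0 HM]].
  destruct lifted_functional_bounded as [ladd [lscal _]].
  apply bounded_derivation_intro.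
  - intros; rewrite projA_add, amalg_mul_addl; apply ladd.
  - intros; rewrite projA_scal, amalg_mul_scall; apply lscal.
  - intros; rewrite projJ_add, amalg_mul_addr; apply ladd.
  - intros; rewrite projJ_scal, amalg_mul_scalr; apply lscal.
  - exists M; intros a c. eapply Rle_trans; [apply HM |].
    rewrite Rmult_assoc. apply Rmult_le_compat_l; [exact M_ge0 |].
    eapply Rle_trans; [apply amalg_norm_mul |]. rewrite Rmult_comm.
    apply Rmult_le_compat; auto using amalg_norm_ge0, norm_projA, norm_projJ.
  - intros a b c. rewrite projJ_mul, !amalg_mul_addr, !ladd, !projA_mul.
    rewrite (amalg_mul_assoc (projA c) (projJ a) (projJ b)),
      (lifted_functional_ideal_square (nmul (projA c) (projJ a)) (projJ b)) by fst_zero.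
    rewrite (amalg_mul_assoc (projA c) (projA a) (projJ b)), (X_comm (projJ a) (projA b)),
      (amalg_mul_assoc (projA c) (projA b) (projJ a)), (X_comm (projA c) (projA b)).
    apply Cx_ext; simpl; ring.
Qed.

Lemma ideal_functional_zero_of_square_annihilating (k : J) : f k = C0.
Proof.
  destruct lifted_functional_bounded as [ladd _].
  assert (mixed0 : forall x z, l (nmul (projA z) (projJ x)) = C0)
    by exact (weakly_amenable_derivation_zero X X_comm X_wa _ mixed_term_derivation).
  assert (l_mul0 : forall x y, l (nmul x y) = C0).
  { intros x y. change (l (projJ (nmul x y)) = C0).
    rewrite projJ_mul, !ladd, mixed0, (X_comm (projJ x) (projA y)), mixed0,
      lifted_functional_ideal_square by reflexivity.
    apply Cx_ext; simpl; ring. }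
  exact (functional_zero_of_square_annihilating X amalg_norm_ge0 X_comm X_wa l
    lifted_functional_bounded l_mul0 (embJ k)).
Qed.

End IdealFunctionals.

Lemma amalg_mul_left_comm (x y z : X) : nmul x (nmul y z) = nmul y (nmul x z).
Proof. rewrite amalg_mul_assoc, (X_comm x y), <- amalg_mul_assoc; reflexivity. Qed.

Ltac nmul_bring a :=
  lazymatch goal with
  | |- _ = nmul a _ => idtac
  | |- _ = a => idtac
  | |- _ = ?t =>
    lazymatch t with
    | context [nmul ?b (nmul a ?r)] => rewrite (amalg_mul_left_comm b a r); nmul_bring a
    | context [nmul ?b a] => rewrite (X_comm b a); nmul_bring a
    end
  end.
Ltac nmul_ac_loop :=
  first [ reflexivity
        | lazymatch goal with
          | |- nmul ?a _ = _ => nmul_bring a; apply (f_equal (nmul a)); nmul_ac_loop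
          end ].
Ltac nmul_ac := repeat rewrite <- amalg_mul_assoc; nmul_ac_loop.

Section IdealDerivation.
Variable D : J -> J -> Cx.
Hypothesis HD : bounded_derivation_to_dual D.

Let DX (u v : X) : Cx := D (snd u) (snd v).

Lemma DX_leibniz (u v t : X) :
  fst u = nzero -> fst v = nzero -> fst t = nzero ->
  DX (nmul u v) t = Cadd (DX v (nmul t u)) (DX u (nmul v t)).
Proof.
  intros u0 v0 t0. destruct HD as [_ [_ [_ [_ Dmul]]]].
  unfold DX. rewrite !snd_mul_of_fst_zero by assumption. apply Dmul.
Qed.

Variables p q m : J.

Let w (z : X) : X := nmul (nmul z (embJ p)) (embJ q).

(* Since [w z] carries two factors from [J], [(x y) (w z) = (x z p) (y q)] is a product of two
   elements of [J], to which the Leibniz rule of [D] applies. *)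
Let G (x z : X) : Cx := Csub (DX (nmul x (w z)) (embJ m)) (DX (w z) (nmul x (embJ m))).

Lemma G_leibniz (x y z : X) : G (nmul x y) z = Cadd (G y (nmul z x)) (G x (nmul y z)).
Proof.
  unfold G, w.
  replace (nmul (nmul (nmul z x) (embJ p)) (embJ q))
    with (nmul (nmul x (nmul z (embJ p))) (embJ q)) by nmul_ac.
  replace (nmul (nmul (nmul y z) (embJ p)) (embJ q))
    with (nmul (nmul z (embJ p)) (nmul y (embJ q))) by nmul_ac.
  replace (nmul y (nmul (nmul x (nmul z (embJ p))) (embJ q)))
    with (nmul (nmul x (nmul z (embJ p))) (nmul y (embJ q))) by nmul_ac.
  replace (nmul x (nmul (nmul z (embJ p)) (nmul y (embJ q))))
    with (nmul (nmul x (nmul z (embJ p))) (nmul y (embJ q))) by nmul_ac.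
  replace (nmul (nmul x y) (nmul (nmul z (embJ p)) (embJ q)))
    with (nmul (nmul x (nmul z (embJ p))) (nmul y (embJ q))) by nmul_ac.
  rewrite (DX_leibniz (nmul x (nmul z (embJ p))) (nmul y (embJ q)) (embJ m)),
    (DX_leibniz (nmul z (embJ p)) (embJ q) (nmul (nmul x y) (embJ m))),
    (DX_leibniz (nmul x (nmul z (embJ p))) (embJ q) (nmul y (embJ m))),
    (DX_leibniz (nmul z (embJ p)) (nmul y (embJ q)) (nmul x (embJ m)))
    by fst_zero.
  replace (nmul (nmul y (embJ m)) (nmul x (nmul z (embJ p))))
    with (nmul (nmul (nmul x y) (embJ m)) (nmul z (embJ p))) by nmul_ac.
  replace (nmul (embJ q) (nmul y (embJ m))) with (nmul (nmul y (embJ q)) (embJ m)) by nmul_ac.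
  replace (nmul (nmul x (embJ m)) (nmul z (embJ p)))
    with (nmul (embJ m) (nmul x (nmul z (embJ p)))) by nmul_ac.
  replace (nmul (nmul y (embJ q)) (nmul x (embJ m)))
    with (nmul (embJ q) (nmul (nmul x y) (embJ m))) by nmul_ac.
  apply Cx_ext; simpl; ring.
Qed.

Lemma DX_bound :
  exists M, 0 <= M /\ forall u v, Cmod (DX u v) <= M * nnorm u * nnorm v.
Proof.
  destruct (bounded_derivation_nonneg_bound J ideal_norm_ge0 D HD) as [M [M_ge0 HM]].
  exists M; split; [exact M_ge0 |]; intros u v. eapply Rle_trans; [apply HM |].
  apply Rmult_le_compat; auto using Rmult_le_pos, ideal_norm_ge0, amalg_norm_snd.
  apply Rmult_le_compat_l; auto using amalg_norm_snd.
Qed.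

Lemma norm_w_le (z : X) : nnorm (w z) <= nnorm z * nnorm p * nnorm q.
Proof.
  unfold w. eapply Rle_trans; [apply amalg_norm_mul |]. rewrite norm_embJ.
  apply Rmult_le_compat_r; [apply ideal_norm_ge0 |].
  eapply Rle_trans; [apply amalg_norm_mul |]. rewrite norm_embJ. apply Rle_refl.
Qed.

Lemma G_bound : exists M, forall x z, Cmod (G x z) <= M * nnorm x * nnorm z.
Proof.
  destruct DX_bound as [M [M_ge0 HM]].
  exists (2 * M * (nnorm p * nnorm q * nnorm m)); intros x z. unfold G.
  pose proof (amalg_norm_ge0 x). pose proof (amalg_norm_ge0 z). pose proof (amalg_norm_ge0 (w z)).
  pose proof (ideal_norm_ge0 p). pose proof (ideal_norm_ge0 q). pose proof (ideal_norm_ge0 m).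
  pose proof (norm_w_le z) as Hw. rewrite <- (norm_embJ m).
  assert (first_term : Cmod (DX (nmul x (w z)) (embJ m))
                       <= M * (nnorm x * (nnorm z * nnorm p * nnorm q)) * nnorm (embJ m)).
  { eapply Rle_trans; [apply HM |].
    apply Rmult_le_compat_r; [apply amalg_norm_ge0 |]. apply Rmult_le_compat_l; [exact M_ge0 |].
    eapply Rle_trans; [apply amalg_norm_mul |]. apply Rmult_le_compat_l; assumption. }
  assert (second_term : Cmod (DX (w z) (nmul x (embJ m)))
                        <= M * (nnorm z * nnorm p * nnorm q) * (nnorm x * nnorm (embJ m))).
  { eapply Rle_trans; [apply HM |].
    apply Rmult_le_compat; auto using Rmult_le_pos, amalg_norm_ge0, amalg_norm_mul.
    apply Rmult_le_compat_l; assumption. }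
  rewrite norm_embJ in *. eapply Rle_trans; [apply Cmod_sub_le |]. nra.
Qed.

Lemma G_derivation : bounded_derivation_to_dual G.
Proof.
  destruct HD as [Df [Dadd [Dscal _]]].
  apply bounded_derivation_intro; [| | | | exact G_bound | exact G_leibniz]; unfold G, w, DX.
  - intros; rewrite !amalg_mul_addl, !amalg_mul_addr, !snd_add, !Dadd.
    apply Cx_ext; simpl; ring.
  - intros; rewrite !amalg_mul_scall, !amalg_mul_scalr, !snd_scal, !Dscal.
    apply Cx_ext; simpl; ring.
  - intros a b c. rewrite !amalg_mul_addl, !snd_add, Dadd.
    destruct (Df (snd (nmul (nmul c (embJ p)) (embJ q)))) as [fadd _]. rewrite fadd.
    apply Cx_ext; simpl; ring.
  - intros l a c. rewrite !amalg_mul_scall, !snd_scal, Dscal.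
    destruct (Df (snd (nmul (nmul c (embJ p)) (embJ q)))) as [_ [fscal _]]. rewrite fscal.
    apply Cx_ext; simpl; ring.
Qed.

(* [G i k = 0] for [i, k] in [J]; expanding [D (i (k p q))] by the Leibniz rule leaves exactly
   [D i (k p q m)]. *)
Lemma derivation_zero_on_quadruple_products (i k : J) :
  D i (nmul (nmul (nmul k p) q) m) = C0.
Proof.
  pose proof (weakly_amenable_derivation_zero X X_comm X_wa G G_derivation (embJ i) (embJ k))
    as G0.
  unfold G, w in G0.
  rewrite (DX_leibniz (embJ i) (nmul (nmul (embJ k) (embJ p)) (embJ q)) (embJ m)),
    (X_comm (embJ m) (embJ i)) in G0 by fst_zero.
  assert (DX0 : DX (embJ i) (nmul (nmul (nmul (embJ k) (embJ p)) (embJ q)) (embJ m)) = C0).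
  { revert G0.
    destruct (DX (embJ i) (nmul (nmul (nmul (embJ k) (embJ p)) (embJ q)) (embJ m))) as [a1 a2].
    destruct (DX (nmul (nmul (embJ k) (embJ p)) (embJ q)) (nmul (embJ i) (embJ m))) as [b1 b2].
    unfold Csub, Cadd, Copp, C0; simpl; intro E; injection E as E1 E2.
    apply Cx_ext; simpl; lra. }
  unfold DX in DX0. rewrite <- !embJ_mul in DX0. exact DX0.
Qed.

End IdealDerivation.

Lemma derivation_left_multiple_functional (D : J -> J -> Cx) (i u : J) :
  bounded_derivation_to_dual D -> bounded_functional (fun k => D i (nmul u k)).
Proof.
  intros [Df _].
  destruct (bounded_functional_nonneg_bound J ideal_norm_ge0 (D i) (Df i)) as [M [M_ge0 HM]].
  destruct (Df i) as [fadd [fscal _]]. split; [| split].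
  - intros; rewrite ideal_mul_addr; apply fadd.
  - intros; rewrite ideal_mul_scalr; apply fscal.
  - exists (M * nnorm u); intro k. eapply Rle_trans; [apply HM |].
    rewrite Rmult_assoc. apply Rmult_le_compat_l; [exact M_ge0 | apply ideal_norm_mul].
Qed.

(* Remove [m], [q], [p] from [D i (k p q m) = 0] one at a time: each time the functional that
   remains annihilates [J^2]. *)
Lemma weakly_amenable_J_of_amalg : weakly_amenable J.
Proof.
  apply (weakly_amenable_of_derivation_zero J). intros D HD.
  assert (triple0 : forall i k1 k2 k : J, D i (nmul (nmul k1 k2) k) = C0).
  { intros i k1 k2. apply (ideal_functional_zero_of_square_annihilating _
      (derivation_left_multiple_functional D i _ HD)).
    intros j k. rewrite ideal_mul_assoc. apply derivation_zero_on_quadruple_products, HD. }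
  assert (double0 : forall i k1 k : J, D i (nmul k1 k) = C0).
  { intros i k1. apply (ideal_functional_zero_of_square_annihilating _
      (derivation_left_multiple_functional D i _ HD)).
    intros j k. rewrite ideal_mul_assoc. apply triple0. }
  destruct HD as [Df _].
  intro i. exact (ideal_functional_zero_of_square_annihilating _ (Df i) (double0 i)).
Qed.

End Amalgamation.

Theorem theorem6p1 (A B : NAlg) (theta : A -> B) (I : B -> Prop)
  (HA : is_banach_algebra A) (HB : is_banach_algebra B)
  (Htheta : contraction_hom A B theta) (HI : closed_ideal B I) :
  commutative (amalg A B theta I HI) ->
  (weakly_amenable (amalg A B theta I HI) <->
   weakly_amenable A /\ weakly_amenable (ideal_alg B I HI)).
Proof.
  intro X_comm. split.
  - intro X_wa. split.
    + exact (weakly_amenable_A_of_amalg A B theta I HA HB HI X_comm X_wa).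
    + exact (weakly_amenable_J_of_amalg A B theta I HA HB Htheta HI X_comm X_wa).
  - intros [A_wa J_wa].
    exact (amalg_weakly_amenable A B theta I HA HB Htheta HI X_comm A_wa J_wa).
Qed.
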